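(* Let $\mathbb{F}\in\{\mathbb{R},\mathbb{C}\}$ and let $\Phi=\{\varphi_i\}_{i=1}^M\subseteq\mathbb{F}^N$ satisfy $\|\varphi_i\|=\sqrt{N/M}$ for every $i\in[M]$. Let $N\le k\le M$. Then $$CV_k(\Phi)\leq\sqrt{{M\choose k}{M-N\choose M-k}},$$ with equality if and only if $\Phi$ is a Parseval frame (i.e. $\Phi\Phi^*=I$) and $cv_k(\Phi_K)=\sqrt{{M\choose k}^{-1}{M-N\choose M-k}}$ for every $K\subseteq[M]$ with $|K|=k$.
   Context: $\Phi$ also denotes the $N\times M$ matrix with columns $\varphi_i$. For $K\subseteq[M]$, $\Phi_K$ is the submatrix of columns indexed by $K$. For an $N\times k$ matrix $F$ with $k\ge N$, $cv_k(F)=\sqrt{\det(FF^* )}$, and $CV_k(\Phi)=\sum_{|K|=k}cv_k(\Phi_K)$. *)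

From HB Require Import structures.
From mathcomp Require Import all_boot all_order all_algebra.
From mathcomp Require Import reals.
From mathcomp.real_closed Require Import complex.
Set Implicit Arguments. Unset Strict Implicit. Unset Printing Implicit Defensive.
Import Order.TTheory GRing.Theory Num.Theory.
Local Open Scope ring_scope.

(* Phi_K : the N x |K| submatrix of the columns of Phi indexed by K
   (in increasing order of the indices). *)
Definition subcols {T : Type} (N M : nat) (K : {set 'I_M}) (Phi : 'M[T]_(N, M))
  : 'M[T]_(N, #|K|) := colsub (fun j : 'I_#|K| => enum_val j) Phi.

Definition cvR {R : realType} (N n : nat) (F : 'M[R]_(N, n)) : R :=
  Num.sqrt (\det (F *m F^T)).
Definition CVR {R : realType} (N M k : nat) (Phi : 'M[R]_(N, M)) : R :=
  \sum_(K : {set 'I_M} | #|K| == k) cvR (subcols K Phi).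

Definition cvC {C : numClosedFieldType} (N n : nat) (F : 'M[C]_(N, n)) : C :=
  sqrtC (\det (F *m map_mx Num.conj (F^T))).
Definition CVC {C : numClosedFieldType} (N M k : nat) (Phi : 'M[C]_(N, M)) : C :=
  \sum_(K : {set 'I_M} | #|K| == k) cvC (subcols K Phi).

From HB Require Import structures.
From mathcomp Require Import all_boot all_order all_algebra.
From mathcomp Require Import reals.
From mathcomp.real_closed Require Import complex.
From mathcomp Require Import perm zify ring.
Set Implicit Arguments. Unset Strict Implicit. Unset Printing Implicit Defensive.
Import Order.TTheory GRing.Theory Num.Theory.
Local Open Scope ring_scope.

(* Write G_K for the Gram matrix Phi_K Phi_K^*, so that cv_k(Phi_K)^2 = det G_K.
   Expanding det G_K = det (sum_(j in K) phi_j phi_j^* ) multilinearly over the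
   maps f : [N] -> [M], only injective f contribute, and each of them is counted
   by exactly C(M-N, M-k) of the sets K; hence
   sum_K det G_K = C(M-N, M-k) det (Phi Phi^* ), a Cauchy-Binet identity.
   The column norms give tr (Phi Phi^* ) = N, so AM-GM on the eigenvalues gives
   det (Phi Phi^* ) <= 1, with equality iff Phi Phi^* = I.  Cauchy-Schwarz over
   the C(M, k) sets K concludes, equality forcing all cv_k(Phi_K) to be equal.
   The real case is the complex one for Phi viewed in R[i]. *)

Lemma sum_sqr_dev (F : fieldType) (I : finType) (P : pred I) (a : I -> F) (n : nat) :
  #|P| = n -> n%:R != 0 :> F ->
  \sum_(i | P i) (a i - (\sum_(j | P j) a j) / n%:R) ^+ 2 =
  \sum_(i | P i) a i ^+ 2 - (\sum_(i | P i) a i) ^+ 2 / n%:R.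
Proof.
move=> cardP n0; set s := \sum_(i | P i) a i; set m := s / n%:R.
have expand i : (a i - m) ^+ 2 = a i ^+ 2 - (m *+ 2) * a i + m ^+ 2 by ring.
rewrite (eq_bigr _ (fun i _ => expand i)) big_split sumrB /= -mulr_sumr sumr_const.
by rewrite cardP -/s -mulr_natr /m; field.
Qed.

Lemma sum_le_sqrtC (C : numClosedFieldType) (I : finType) (P : pred I) (a : I -> C)
    (n : nat) (c : C) :
  #|P| = n -> (0 < n)%N -> (forall i, P i -> 0 <= a i) ->
  \sum_(i | P i) a i ^+ 2 <= c ->
  \sum_(i | P i) a i <= sqrtC (n%:R * c) /\
  (\sum_(i | P i) a i = sqrtC (n%:R * c) <-> forall i, P i -> a i = sqrtC (n%:R^-1 * c)).
Proof.
move=> cardP n_gt0 a_ge0 le_qc.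
set s := \sum_(i | P i) a i; set q := \sum_(i | P i) a i ^+ 2.
have n_neq0 : n%:R != 0 :> C by rewrite pnatr_eq0 -lt0n.
have s_ge0 : 0 <= s by apply: sumr_ge0.
have c_ge0 : 0 <= c.
  by apply: le_trans le_qc; apply: sumr_ge0 => i Pi; rewrite exprn_ge0 ?a_ge0.
have dev_ge0 i : P i -> 0 <= (a i - s / n%:R) ^+ 2.
  move=> Pi; rewrite real_exprn_even_ge0 // rpredB ?ger0_real ?a_ge0 //.
  by rewrite divr_ge0 ?ler0n.
have le_s2q : s ^+ 2 <= n%:R * q.
  have : 0 <= \sum_(i | P i) (a i - s / n%:R) ^+ 2 by exact: sumr_ge0.
  rewrite /s sum_sqr_dev // -/s -/q subr_ge0.
  by rewrite ler_pdivrMr ?ltr0n // mulrC.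
have le_s2c : s ^+ 2 <= n%:R * c.
  by apply: le_trans le_s2q _; rewrite ler_pM2l ?ltr0n.
split; first by rewrite -(sqrCK s_ge0) ler_sqrtC ?nnegrE ?mulr_ge0 ?ler0n ?exprn_ge0.
split=> [s_eq i Pi | a_const].
- have s2 : s ^+ 2 = n%:R * c by rewrite s_eq sqrtCK.
  have q_eq : q = c.
    by apply/le_anti; rewrite le_qc -(@ler_pM2l _ n%:R) ?ltr0n // -s2 le_s2q.
  have dev0 : \sum_(i | P i) (a i - s / n%:R) ^+ 2 = 0.
    by rewrite /s sum_sqr_dev // -/s -/q q_eq s2; field.
  move/eqP: (psumr_eq0P dev_ge0 dev0 Pi); rewrite sqrf_eq0 subr_eq0 => /eqP ->.
  have mean_ge0 : 0 <= s / n%:R by rewrite divr_ge0 ?ler0n.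
  by rewrite -(sqrCK mean_ge0) expr_div_n s2; congr sqrtC; field.
- have t_ge0 : 0 <= n%:R * sqrtC (n%:R^-1 * c).
    by rewrite mulr_ge0 ?ler0n ?sqrtC_ge0 ?mulr_ge0 ?invr_ge0 ?ler0n.
  rewrite /s (eq_bigr _ a_const) sumr_const cardP -(mulr_natl (sqrtC _)) -(sqrCK t_ge0).
  by rewrite exprMn sqrtCK; congr sqrtC; field.
Qed.

Section Gram.
Variable C : numClosedFieldType.

Definition gram N n (F : 'M[C]_(N, n)) : 'M[C]_N := F *m map_mx Num.conj F^T.

Lemma gram_mull N n (P : 'M[C]_N) (F : 'M[C]_(N, n)) :
  gram (P *m F) = P *m gram F *m map_mx Num.conj P^T.
Proof. by rewrite /gram trmx_mul map_mxM !mulmxA. Qed.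

Lemma gram_diag_ge0 N n (F : 'M[C]_(N, n)) i : 0 <= gram F i i.
Proof. by rewrite mxE; apply: sumr_ge0 => j _; rewrite !mxE mul_conjC_ge0. Qed.

Lemma mxtrace_gram N n (F : 'M[C]_(N, n)) :
  \tr (gram F) = \sum_j \sum_i `|F i j| ^+ 2.
Proof.
rewrite /mxtrace exchange_big; apply: eq_bigr => i _; rewrite mxE.
by apply: eq_bigr => j _; rewrite !mxE normCK.
Qed.

Lemma gram_normal N n (F : 'M[C]_(N, n)) : gram F \is normalmx.
Proof.
suff gram_adj : map_mx Num.conj (gram F)^T = gram F by apply/normalmxP; rewrite gram_adj.
apply/matrixP => i j; rewrite !mxE rmorph_sum; apply: eq_bigr => l _.
by rewrite !mxE rmorphM /= conjCK mulrC.
Qed.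

Section Normal.
Variables (n : nat) (A : 'M[C]_n).
Hypothesis normalA : A \is normalmx.
Local Notation P := (spectralmx A).
Local Notation X := (spectral_diag A).

Lemma diag_spectral : diag_mx X = P *m A *m invmx P.
Proof.
have Pu := spectral_unit A.
by rewrite [B in P *m B *m _](orthomx_spectralP normalA) !mulmxA mulmxV // mul1mx mulmxK.
Qed.

Lemma det_spectral : \det A = \prod_i X 0 i.
Proof.
rewrite -det_diag diag_spectral !det_mulmx mulrAC -det_mulmx mulmxV ?spectral_unit //.
by rewrite det1 mul1r.
Qed.

Lemma mxtrace_spectral : \tr A = \sum_i X 0 i.
Proof.
by rewrite -mxtrace_diag diag_spectral mxtrace_mulC mulmxA mulVmx ?spectral_unit ?mul1mx.
Qed.

Lemma spectral_diag_const1 : X = const_mx 1 -> A = 1%:M.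
Proof.
move=> X1; rewrite [LHS](orthomx_spectralP normalA) X1 diag_const_mx mulmx1.
by rewrite mulVmx ?spectral_unit.
Qed.

End Normal.

Lemma spectral_gram_ge0 N n (F : 'M[C]_(N, n)) i : 0 <= spectral_diag (gram F) 0 i.
Proof.
have := congr1 (fun D : 'M_N => D i i) (diag_spectral (gram_normal F)).
rewrite /= mxE eqxx mulr1n => ->.
rewrite invmx_unitary ?spectral_unitarymx // -gram_mull; exact: gram_diag_ge0.
Qed.

Lemma det_gram_ge0 N n (F : 'M[C]_(N, n)) : 0 <= \det (gram F).
Proof.
rewrite det_spectral ?gram_normal //.
by apply: prodr_ge0 => i _; apply: spectral_gram_ge0.
Qed.

Lemma det_gram_le1 N n (F : 'M[C]_(N, n)) :
  \tr (gram F) = N%:R -> \det (gram F) <= 1 ?= iff (gram F == 1%:M).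
Proof.
move=> trN; have nF := gram_normal F; set X := spectral_diag (gram F).
have := leif_AGM (A := predT) (fun i _ => spectral_gram_ge0 F i).
rewrite card_ord -det_spectral // -mxtrace_spectral // trN.
have -> : (N%:R / N%:R) ^+ N = 1 :> C.
  by have [->|N_gt0] := posnP N; rewrite ?expr0 // divff ?expr1n // pnatr_eq0 -lt0n.
move=> [le_det1 eq_det1]; split=> //; apply/eqP/eqP => [/eqP | ->]; last exact: det1.
rewrite eq_det1 => /forall_inP X_eq; apply: spectral_diag_const1 => //.
apply/matrixP => i j; rewrite ord1 mxE.
move: trN; rewrite mxtrace_spectral // (eq_bigr (fun=> X 0 j)); last first.
  by move=> l _; apply/eqP; have /forall_inP := X_eq l isT; apply.
have N_gt0 : (0 < N)%N := leq_ltn_trans (leq0n j) (ltn_ord j).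
rewrite sumr_const card_ord -[_ *+ N]mulr_natl -{2}(mulr1 N%:R) => /mulfI; apply.
by rewrite pnatr_eq0 -lt0n.
Qed.

End Gram.

Lemma card_supsets (T : finType) (A : {set T}) k : (k <= #|T|)%N ->
  #|[set K : {set T} | A \subset K & #|K| == k]| = 'C(#|T| - #|A|, #|T| - k).
Proof.
move=> le_kT; have cardCA : #|~: A| = (#|T| - #|A|)%N by have := cardsC A; lia.
rewrite -cardCA -cards_draws.
rewrite -(card_preimset _ (@setC_inj T)); apply: eq_card => K; rewrite !inE subsetC.
by congr (_ && _); apply/eqP/eqP; have := cardsC K; lia.
Qed.

Lemma prod_mem_imset (R : comPzSemiRingType) (I T : finType) (f : I -> T) (B : {set T}) :
  \prod_i ((f i \in B)%:R : R) = (f @: setT \subset B)%:R.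
Proof.
have [sub_fB | /subsetPn[_ /imsetP[i _ ->] fiNB]] := boolP (_ \subset B).
  by apply: big1 => i _; rewrite (subsetP sub_fB) ?imset_f.
by rewrite (bigD1 i) //= (negbTE fiNB) mul0r.
Qed.

Section ColumnSubsets.
Variables (C : numClosedFieldType) (N M : nat) (Phi : 'M[C]_(N, M)).

Lemma gram_colE j a b : gram (col j Phi) a b = Phi a j * Num.conj (Phi b j).
Proof. by rewrite mxE big_ord1 !mxE. Qed.

Lemma gram_subcols (K : {set 'I_M}) :
  gram (subcols K Phi) = \sum_(j in K) gram (col j Phi).
Proof.
apply/matrixP => a b; rewrite !mxE summxE [RHS]big_enum_val /=.
by apply: eq_bigr => j _; rewrite gram_colE !mxE.
Qed.

Lemma gram_sum_col : gram Phi = \sum_(j in [set: 'I_M]) gram (col j Phi).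
Proof.
apply/matrixP => a b; rewrite !mxE summxE.
by apply: eq_big => [j | j _]; rewrite ?inE // gram_colE !mxE.
Qed.

Definition gram_coef (f : {ffun 'I_N -> 'I_M}) : C :=
  \det (\matrix_(a, b) (Phi a (f a) * Num.conj (Phi b (f a)))).

Lemma det_sum_gram_col (B : {set 'I_M}) :
  \det (\sum_(j in B) gram (col j Phi)) =
  \sum_(f : {ffun 'I_N -> 'I_M}) (f @: setT \subset B)%:R * gram_coef f.
Proof.
rewrite /determinant.
under eq_bigr => s _.
  rewrite (eq_bigr (fun a => \sum_j ((j \in B)%:R * (Phi a j * Num.conj (Phi ((s : 'S_N) a) j))))).
    by rewrite bigA_distr_bigA mulr_sumr; over.
  move=> a _; rewrite summxE big_mkcond /=; apply: eq_bigr => j _.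
  by rewrite gram_colE; case: (j \in B); rewrite ?mul1r ?mul0r.
rewrite exchange_big /=; apply: eq_bigr => f _.
rewrite -prod_mem_imset /gram_coef /determinant mulr_sumr; apply: eq_bigr => s _.
rewrite big_split /= mulrCA; congr (_ * (_ * _)).
by apply: eq_bigr => a _; rewrite mxE.
Qed.

Lemma gram_coef_eq0 (f : {ffun 'I_N -> 'I_M}) : ~~ injectiveb f -> gram_coef f = 0.
Proof.
move=> /injectivePn [a1 [a2 neq_a12 eq_f12]]; rewrite /gram_coef.
have -> : \matrix_(a, b) (Phi a (f a) * Num.conj (Phi b (f a))) =
    diag_mx (\row_a Phi a (f a)) *m \matrix_(a, b) Num.conj (Phi b (f a)).
  by apply/matrixP => a b; rewrite mul_diag_mx !mxE.
rewrite det_mulmx [X in _ * X](determinant_alternate neq_a12) ?mulr0 // => b.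
by rewrite !mxE eq_f12.
Qed.

Lemma sum_det_gram_subcols k : (N <= k <= M)%N ->
  \sum_(K : {set 'I_M} | #|K| == k) \det (gram (subcols K Phi)) =
  'C(M - N, M - k)%:R * \det (gram Phi).
Proof.
move=> /andP[le_Nk le_kM].
under eq_bigr do rewrite gram_subcols det_sum_gram_col.
rewrite gram_sum_col det_sum_gram_col exchange_big mulr_sumr; apply: eq_bigr => f _.
have [inj_f | /gram_coef_eq0 ->] := boolP (injectiveb f); last first.
  by rewrite big1 => [|K _]; rewrite !mulr0.
rewrite -mulr_suml subsetT mul1r; congr (_ * _).
have card_im : #|f @: [set: 'I_N]| = N.
  by rewrite card_imset ?cardsT ?card_ord //; apply/injectiveP.
have := card_supsets (f @: setT) (k := k); rewrite card_ord card_im => <- //.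
rewrite (eq_bigr (fun K : {set 'I_M} => if f @: setT \subset K then 1 else 0)); last first.
  by move=> K _; case: ifP.
rewrite -big_mkcondr sumr_const; congr (_ *+ _).
by apply: eq_card => K; rewrite !inE andbC.
Qed.

End ColumnSubsets.

Lemma mxtrace_gram_equal_norm (C : numClosedFieldType) N M (Phi : 'M[C]_(N, M)) :
  (N <= M)%N -> (forall i, \sum_(j < N) `|Phi j i| ^+ 2 = N%:R / M%:R) ->
  \tr (gram Phi) = N%:R.
Proof.
move=> le_NM col_norm; rewrite mxtrace_gram (eq_bigr _ (fun i _ => col_norm i)).
rewrite sumr_const card_ord -[_ *+ M]mulr_natr.
have [M0 | M_gt0] := posnP M; last by rewrite divfK // pnatr_eq0 -lt0n.
by move: le_NM; rewrite M0 leqn0 => /eqP ->; rewrite mulr0.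
Qed.

Lemma CVC_bound (C : numClosedFieldType) N M k (Phi : 'M[C]_(N, M)) :
  (N <= k <= M)%N ->
  (forall i, \sum_(j < N) `|Phi j i| ^+ 2 = N%:R / M%:R) ->
  CVC k Phi <= sqrtC ('C(M, k)%:R * 'C(M - N, M - k)%:R) /\
  (CVC k Phi = sqrtC ('C(M, k)%:R * 'C(M - N, M - k)%:R) <->
   gram Phi = 1%:M /\
   forall K : {set 'I_M}, #|K| = k ->
     cvC (subcols K Phi) = sqrtC ('C(M, k)%:R^-1 * 'C(M - N, M - k)%:R)).
Proof.
move=> /andP[le_Nk le_kM] /(mxtrace_gram_equal_norm (leq_trans le_Nk le_kM)) trN.
set n := 'C(M, k); set c := 'C(M - N, M - k).
pose a (K : {set 'I_M}) := cvC (subcols K Phi).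
have c_gt0 : (0 < c)%N by rewrite bin_gt0 leq_sub2l.
have card_k : #|[pred K : {set 'I_M} | #|K| == k]| = n.
  rewrite /n -[M in 'C(M, _)]card_ord -card_draws.
  by apply: eq_card => K; rewrite !inE.
have sum_a2 : \sum_(K : {set 'I_M} | #|K| == k) a K ^+ 2 = c%:R * \det (gram Phi).
  by rewrite /c -sum_det_gram_subcols ?le_Nk //; apply: eq_bigr => K _; apply: sqrtCK.
have le_sum_a2 : \sum_(K : {set 'I_M} | #|K| == k) a K ^+ 2 <= c%:R.
  by rewrite sum_a2 ler_piMr ?ler0n ?(det_gram_le1 trN).
have n_gt0 : (0 < n)%N by rewrite bin_gt0.
have a_ge0 K : 0 <= a K by rewrite sqrtC_ge0; apply: det_gram_ge0.
have [le_CV eq_CV] := sum_le_sqrtC card_k n_gt0 (fun K _ => a_ge0 K) le_sum_a2.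
split=> //; rewrite eq_CV; split=> [a_const | [_ a_const] K /eqP]; last exact: a_const.
split=> [|K /eqP]; last exact: a_const.
(* All cv_k(Phi_K) being equal makes the sum of their squares exactly c, so det (gram Phi) = 1. *)
apply/eqP; rewrite -(det_gram_le1 trN).2; apply/eqP/(mulfI (x := c%:R)).
  by rewrite pnatr_eq0 -lt0n.
rewrite mulr1 -sum_a2 (eq_bigr _ (fun K kK => congr1 (fun x => x ^+ 2) (a_const K kK))).
rewrite sumr_const card_k sqrtCK -[_ *+ n]mulr_natl mulrA divff ?mul1r //.
by rewrite pnatr_eq0 -lt0n.
Qed.

Lemma map_subcols (T U : Type) (f : T -> U) N M (K : {set 'I_M}) (A : 'M[T]_(N, M)) :
  subcols K (map_mx f A) = map_mx f (subcols K A).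
Proof. exact/esym/map_mxsub. Qed.

Section RealComplex.
Variable R : realType.
Local Notation rc := (real_complex R).

Lemma sqrtC_rc (x : R) : 0 <= x -> sqrtC (rc x) = rc (Num.sqrt x).
Proof.
move=> x_ge0; have sqrt_ge0 : 0 <= rc (Num.sqrt x) by rewrite ler0c sqrtr_ge0.
by rewrite -(sqrCK sqrt_ge0) -rmorphXn sqr_sqrtr.
Qed.

Lemma gram_rc N n (F : 'M[R]_(N, n)) : gram (map_mx rc F) = map_mx rc (F *m F^T).
Proof.
rewrite map_mxM /gram map_trmx; congr (_ *m _); apply/matrixP => i j; rewrite !mxE.
exact: conjc_real.
Qed.

Lemma cvR_rc N n (F : 'M[R]_(N, n)) : rc (cvR F) = cvC (map_mx rc F).
Proof.
rewrite /cvC -/(gram _) gram_rc det_map_mx sqrtC_rc //.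
by rewrite -ler0c -det_map_mx -gram_rc det_gram_ge0.
Qed.

Lemma CVR_rc N M k (Phi : 'M[R]_(N, M)) : rc (CVR k Phi) = CVC k (map_mx rc Phi).
Proof. by rewrite rmorph_sum; apply: eq_bigr => K _; rewrite map_subcols -cvR_rc. Qed.

Lemma sum_sqr_rc N M (Phi : 'M[R]_(N, M)) i :
  Num.sqrt (\sum_(j < N) Phi j i ^+ 2) = Num.sqrt (N%:R / M%:R) ->
  \sum_(j < N) `|map_mx rc Phi j i| ^+ 2 = N%:R / M%:R.
Proof.
move/(congr1 (fun x => x ^+ 2)); rewrite !sqr_sqrtr ?divr_ge0 ?ler0n //; last first.
  by apply: sumr_ge0 => j _; apply: sqr_ge0.
move=> eq_sum; transitivity (rc (\sum_(j < N) Phi j i ^+ 2)).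
  rewrite rmorph_sum; apply: eq_bigr => j _.
  by rewrite normCK !mxE rmorphXn expr2; congr (_ * _); apply: conjc_real.
by rewrite eq_sum fmorph_div !rmorph_nat.
Qed.

Lemma CVR_bound N M k (Phi : 'M[R]_(N, M)) :
  (N <= k <= M)%N ->
  (forall i, Num.sqrt (\sum_(j < N) Phi j i ^+ 2) = Num.sqrt (N%:R / M%:R)) ->
  CVR k Phi <= Num.sqrt ('C(M, k)%:R * 'C(M - N, M - k)%:R) /\
  (CVR k Phi = Num.sqrt ('C(M, k)%:R * 'C(M - N, M - k)%:R) <->
   Phi *m Phi^T = 1%:M /\
   forall K : {set 'I_M}, #|K| = k ->
     cvR (subcols K Phi) = Num.sqrt ('C(M, k)%:R^-1 * 'C(M - N, M - k)%:R)).
Proof.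
move=> le_NkM col_norm.
have [le_CV eq_CV] := CVC_bound le_NkM (fun i => sum_sqr_rc (col_norm i)).
have bound_rc : rc (Num.sqrt ('C(M, k)%:R * 'C(M - N, M - k)%:R)) =
                sqrtC ('C(M, k)%:R * 'C(M - N, M - k)%:R).
  by rewrite -sqrtC_rc ?mulr_ge0 ?ler0n // rmorphM !rmorph_nat.
have mean_rc : rc (Num.sqrt ('C(M, k)%:R^-1 * 'C(M - N, M - k)%:R)) =
               sqrtC ('C(M, k)%:R^-1 * 'C(M - N, M - k)%:R).
  by rewrite -sqrtC_rc ?mulr_ge0 ?invr_ge0 ?ler0n // rmorphM fmorphV !rmorph_nat.
split; first by rewrite -lecR CVR_rc bound_rc.
split=> [/(congr1 rc) | [gram1 cv_mean]].
- rewrite CVR_rc bound_rc => /eq_CV[gram1 cv_mean]; split.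
    by apply: (@map_mx_inj _ _ rc); rewrite map_mx1 -gram_rc.
  by move=> K /cv_mean; rewrite map_subcols -cvR_rc -mean_rc => /complexI.
- apply: complexI; rewrite CVR_rc bound_rc; apply/eq_CV; split.
    by rewrite gram_rc gram1 map_mx1.
  by move=> K /cv_mean cv_K; rewrite map_subcols -cvR_rc cv_K.
Qed.

End RealComplex.

Unset Implicit Arguments.

Theorem proposition19 (R : realType) (N M k : nat) (hNk : (N <= k)%N) (hkM : (k <= M)%N) :
  (* F = R *)
  (forall Phi : 'M[R]_(N, M),
     (forall i : 'I_M, Num.sqrt (\sum_(j < N) Phi j i ^+ 2) = Num.sqrt (N%:R / M%:R)) ->
     CVR k Phi <= Num.sqrt ('C(M, k)%:R * 'C(M - N, M - k)%:R)
     /\ (CVR k Phi = Num.sqrt ('C(M, k)%:R * 'C(M - N, M - k)%:R) <->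
         (Phi *m Phi^T = 1%:M /\
          forall K : {set 'I_M}, #|K| = k ->
            cvR (subcols K Phi) = Num.sqrt ('C(M, k)%:R^-1 * 'C(M - N, M - k)%:R))))
  /\
  (* F = C *)
  (forall Phi : 'M[R[i]]_(N, M),
     (forall i : 'I_M, sqrtC (\sum_(j < N) `|Phi j i| ^+ 2) = sqrtC (N%:R / M%:R)) ->
     CVC k Phi <= sqrtC ('C(M, k)%:R * 'C(M - N, M - k)%:R)
     /\ (CVC k Phi = sqrtC ('C(M, k)%:R * 'C(M - N, M - k)%:R) <->
         (Phi *m map_mx Num.conj (Phi^T) = 1%:M /\
          forall K : {set 'I_M}, #|K| = k ->
            cvC (subcols K Phi) = sqrtC ('C(M, k)%:R^-1 * 'C(M - N, M - k)%:R)))).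
Proof.
have le_NkM : (N <= k <= M)%N by rewrite hNk hkM.
split=> Phi col_norm; first exact: CVR_bound.
by apply: CVC_bound => // i; apply: sqrtC_inj.
Qed.
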